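(* Let $f:X\to Y$ be a surjective continuous mapping with $X$ locally Menger. If $f$ is weakly perfect, or if $f$ is bi-quotient, then $Y$ is locally Menger.
   Context: A space $X$ is Menger if for each sequence $(\mathcal{U}_n)$ of open covers of $X$ there is a sequence $(\mathcal{V}_n)$ with each $\mathcal{V}_n$ a finite subset of $\mathcal{U}_n$ and $\bigcup_{n}\bigcup\mathcal{V}_n=X$. A space $X$ is locally Menger if for each $x\in X$ there exist an open set $U$ and a Menger subspace $Y$ of $X$ with $x\in U\subseteq Y$. A surjective continuous map $f:X\to Y$ is weakly perfect if $f$ is closed and $f^{-1}(y)$ is Lindelöf for every $y\in Y$. A surjective continuous map $f:X\to Y$ is bi-quotient if whenever $y\in Y$ and $\mathcal{U}$ is a cover of $f^{-1}(y)$ by open subsets of $X$, there are finitely many $U\in\mathcal{U}$ whose images $f(U)$ cover some open set of $Y$ containing $y$. *)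

From HB Require Import structures.
From mathcomp Require Import all_boot all_order.
From mathcomp Require Import boolp classical_sets functions cardinality topology.
Set Implicit Arguments. Unset Strict Implicit. Unset Printing Implicit Defensive.
Local Open Scope classical_set_scope.

Definition open_cover_of {T : topologicalType} (A : set T) (U : set (set T)) :=
  (forall u, U u -> open u) /\ A `<=` \bigcup_(u in U) u.

(* The subspace A of T is Menger (covers by open sets of T, equivalently of the
   subspace A). *)
Definition Menger_subspace {T : topologicalType} (A : set T) : Prop :=
  forall U : nat -> set (set T), (forall n, open_cover_of A (U n)) ->
  exists V : nat -> set (set T),
    (forall n, finite_set (V n) /\ V n `<=` U n) /\
    A `<=` \bigcup_(n in [set: nat]) \bigcup_(u in V n) u.

Definition Menger_space (T : topologicalType) : Prop := Menger_subspace [set: T].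

Definition locally_Menger (T : topologicalType) : Prop :=
  forall x : T, exists (U Y : set T),
    open U /\ Menger_subspace Y /\ U x /\ U `<=` Y.

Definition Lindelof_subspace {T : topologicalType} (A : set T) : Prop :=
  forall U : set (set T), open_cover_of A U ->
  exists V : set (set T), countable V /\ V `<=` U /\ open_cover_of A V.

Definition closed_map {X Y : topologicalType} (f : X -> Y) : Prop :=
  forall C : set X, closed C -> closed (f @` C).

Definition surjective_map {X Y : Type} (f : X -> Y) : Prop :=
  forall y : Y, exists x : X, f x = y.

Definition weakly_perfect {X Y : topologicalType} (f : X -> Y) : Prop :=
  [/\ surjective_map f, continuous f, closed_map f &
      forall y : Y, Lindelof_subspace (f @^-1` [set y])].

Definition bi_quotient {X Y : topologicalType} (f : X -> Y) : Prop :=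
  [/\ surjective_map f, continuous f &
    forall (y : Y) (U : set (set X)), open_cover_of (f @^-1` [set y]) U ->
    exists (V : set (set X)) (W : set Y),
      [/\ finite_set V, V `<=` U, open W, W y &
          W `<=` \bigcup_(u in V) (f @` u)]].

From mathcomp Require Import all_boot all_order.
From mathcomp Require Import boolp classical_sets functions cardinality topology.
Local Open Scope classical_set_scope.

(* Call a set Menger-bounded when it lies inside some Menger subspace.
   Countable unions and continuous images of Menger-bounded sets are again
   Menger-bounded.  Cover the fibre of y by countably many (weakly perfect
   case) or finitely many (bi-quotient case) open Menger-bounded sets, with
   union O.  Then f(O) is Menger-bounded, and it contains an open
   neighbourhood of y: for a closed surjection, the set of points whose
   fibre lies in O; for a bi-quotient map, the open set given by definition. *)

Definition Menger_bounded {T : topologicalType} (A : set T) : Prop :=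
  exists M, Menger_subspace M /\ A `<=` M.

Lemma finite_subset_image {aT : pointedType} {rT : Type} (f : aT -> rT)
    (A : set aT) (B : set rT) :
  finite_set B -> B `<=` f @` A ->
  exists C, [/\ finite_set C, C `<=` A & f @` C = B].
Proof.
move=> finB BfA.
have /choice [g gP] b : exists a, B b -> A a /\ f a = b.
  have [/BfA [a Aa <-]|nBb] := EM (B b); first by exists a.
  by exists point => /nBb.
exists (g @` B); split; first exact: finite_image.
  by move=> _ [b Bb <-]; have [] := gP b Bb.
apply/seteqP; split; first by move=> _ [_ [b Bb <-] <-]; have [_ ->] := gP b Bb.
by move=> b Bb; exists (g b); [exists b | have [] := gP b Bb].
Qed.

Section Menger.
Context {T : topologicalType}.

Lemma Menger_set0 : Menger_subspace (@set0 T).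
Proof.
move=> U _; exists (fun _ => set0); split => // n.
by split; [exact: finite_set0 | move=> u].
Qed.

(* The k-th subspace is treated with the covers shifted by k, so that at stage
   m only the finitely many subspaces k <= m contribute. *)
Lemma Menger_bigcup_nat (M : nat -> set T) :
  (forall k, Menger_subspace (M k)) ->
  Menger_subspace (\bigcup_(k in [set: nat]) M k).
Proof.
move=> MM U Ucov.
have shifted k : exists W : nat -> set (set T),
    (forall n, finite_set (W n) /\ W n `<=` U (n + k)%N) /\
    M k `<=` \bigcup_(n in [set: nat]) \bigcup_(u in W n) u.
  apply: MM => n; have [Uo Uc] := Ucov (n + k)%N.
  by split=> // x Mx; apply: Uc; exists k.
have [W WP] := choice shifted.
exists (fun m => \bigcup_(k in `I_m.+1) W k (m - k)%N); split=> [m|].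
  split.
    apply: bigcup_finite => // k _.
    by have [/(_ (m - k)%N) []] := WP k.
  move=> u [k /= km Wu]; have [/(_ (m - k)%N) [_ WU] _] := WP k.
  by have := WU _ Wu; rewrite subnK.
move=> x [k _ Mx]; have [_ /(_ x Mx) [n _ [u Wu ux]]] := WP k.
exists (n + k)%N => //; exists u => //; exists k => /=.
  by rewrite ltnS leq_addl.
by rewrite addnK.
Qed.

Lemma Menger_bounded_bigcup (V : set (set T)) :
  countable V -> (forall u, V u -> Menger_bounded u) ->
  Menger_bounded (\bigcup_(u in V) u).
Proof.
move=> /pfcard_geP [->|[h]] Vbounded.
  by exists set0; split; [exact: Menger_set0 | rewrite bigcup_set0].
have /choice [M MP] k : Menger_bounded (h k) by apply: Vbounded; apply: funS.
exists (\bigcup_(k in [set: nat]) M k); split.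
  by apply: Menger_bigcup_nat => k; have [] := MP k.
move=> x [u /(@surj _ _ _ _ h) [k _ <-] ux].
by exists k => //; have [_] := MP k; apply.
Qed.

Lemma open_Menger_bounded_cover (A : set T) :
  locally_Menger T -> open_cover_of A [set u | open u /\ Menger_bounded u].
Proof.
move=> lM; split=> [u []//|x _].
have [U [M [oU [MM [Ux UM]]]]] := lM x.
by exists U => //; split=> //; exists M.
Qed.

End Menger.

Lemma Menger_image {X Y : topologicalType} (f : X -> Y) (A : set X) :
  continuous f -> Menger_subspace A -> Menger_subspace (f @` A).
Proof.
move=> fcont MA U Ucov.
have preimage_cov n : open_cover_of A (preimage f @` U n).
  have [Uo Uc] := Ucov n; split.
    by move=> _ [u Uu <-]; apply: open_comp => [x _|]; [exact: fcont | exact: Uo].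
  move=> x Ax; have [u Uu ufx] := Uc (f x) (imageP f Ax).
  by exists (f @^-1` u) => //; exists u.
have [V [VP Vcov]] := MA _ preimage_cov.
have /choice [W WP] n : exists W,
    [/\ finite_set W, W `<=` U n & preimage f @` W = V n].
  by have [finV VU] := VP n; apply: finite_subset_image.
exists W; split=> [n|]; first by have [] := WP n.
move=> _ [x Ax <-]; have [n _ [v Vv vx]] := Vcov x Ax.
have [_ _ WV] := WP n; rewrite -WV in Vv; case: Vv => u Wu uv.
by exists n => //; exists u => //; rewrite -uv in vx.
Qed.

Lemma Menger_bounded_image {X Y : topologicalType} (f : X -> Y) (A : set X) :
  continuous f -> Menger_bounded A -> Menger_bounded (f @` A).
Proof.
move=> fcont [M [MM AM]]; exists (f @` M).
by split; [exact: Menger_image | exact: image_subset].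
Qed.

Lemma closed_map_open_fibre_sub {X Y : topologicalType} (f : X -> Y) (O : set X) :
  closed_map f -> open O -> open [set y | f @^-1` [set y] `<=` O].
Proof.
move=> fclosed oO.
have -> : [set y | f @^-1` [set y] `<=` O] = ~` (f @` ~` O).
  apply/seteqP; split=> [y yO [x Ox fxy]|y nfy x fxy].
    by apply: Ox; apply: yO.
  by apply: contrapT => Ox; apply: nfy; exists x.
by apply: closed_openC; apply: fclosed; apply: open_closedC.
Qed.

Lemma weakly_perfect_locally_Menger {X Y : topologicalType} (f : X -> Y) :
  weakly_perfect f -> locally_Menger X -> locally_Menger Y.
Proof.
move=> [fsurj fcont fclosed fLind] lMX y.
have [V [cV [VP [_ fibreV]]]] := fLind y _ (open_Menger_bounded_cover _ lMX).
set O := \bigcup_(u in V) u.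
have oO : open O by apply: bigcup_open => u /VP [].
have [M [MM fOM]] : Menger_bounded (f @` O).
  by apply: Menger_bounded_image => //; apply: Menger_bounded_bigcup => // u /VP [].
exists [set y' | f @^-1` [set y'] `<=` O], M; split.
  exact: closed_map_open_fibre_sub.
split=> //; split=> // y' fibreO.
have [x fxy'] := fsurj y'; apply: fOM; exists x => //.
by apply: fibreO.
Qed.

Lemma bi_quotient_locally_Menger {X Y : topologicalType} (f : X -> Y) :
  bi_quotient f -> locally_Menger X -> locally_Menger Y.
Proof.
move=> [_ fcont fbq] lMX y.
have [V [W [finV VP oW Wy WV]]] := fbq y _ (open_Menger_bounded_cover _ lMX).
have [M [MM fVM]] : Menger_bounded (f @` \bigcup_(u in V) u).
  apply: Menger_bounded_image => //.
  by apply: Menger_bounded_bigcup => [|u /VP []//]; exact: finite_set_countable.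
exists W, M; split=> //; split=> //; split=> // w /WV [u Vu [x ux <-]].
by apply: fVM; exists x => //; exists u.
Qed.

Theorem theorem4p1 (X Y : topologicalType) (f : X -> Y) :
  surjective_map f -> continuous f -> locally_Menger X ->
  (weakly_perfect f \/ bi_quotient f) -> locally_Menger Y.
Proof.
move=> _ _ lMX [fwp|fbq].
- exact: weakly_perfect_locally_Menger fwp lMX.
- exact: bi_quotient_locally_Menger fbq lMX.
Qed.
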